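(* Let $d,m,n$ be positive integers with $\min\{m,n\}\ge2$ and $d\le mn$, let $M_1,\dots,M_{q_0}$ be all the $2\times2$ minors of $m\times n$ matrices, and let $P_1,P_2:\mathbb{R}^d\to M^{m\times n}$ be linear isomorphisms onto their images with $P_1\sim P_2$. Let $K_j=P_j(\mathbb{R}^d)$, $j=1,2$. Then $K_1$ has no Rank-$1$ connections if and only if $K_2$ has no Rank-$1$ connections, and $\mathrm{Span}\{M_1(P_1(z)),\dots,M_{q_0}(P_1(z))\}=\mathrm{Span}\{M_1(P_2(z)),\dots,M_{q_0}(P_2(z))\}$ as subsets of the polynomial ring $\mathbb{R}[z_1,\dots,z_d]$.
   Context: A linear map $P:\mathbb{R}^d\to M^{m\times n}$ has the form $P(z)=(a_{ij}\cdot z)_{ij}$ with $a_{ij}\in\mathbb{R}^d$ and is viewed as an $m\times n$ matrix with entries in $\mathbb{R}[z_1,\dots,z_d]$. $P_1\sim P_2$ means $P_2(z)$ is obtained from $P_1(z)$, as such matrices, by finitely many elementary row and column operations. A set has Rank-$1$ connections if it contains $A\neq B$ with $\mathrm{Rank}(A-B)=1$. *)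

From HB Require Import structures.
From mathcomp Require Import all_boot all_order all_algebra.
From mathcomp Require Import mpoly.
Set Implicit Arguments. Unset Strict Implicit. Unset Printing Implicit Defensive.
Import Order.TTheory GRing.Theory Num.Theory.
Local Open Scope ring_scope.

Section Defs.
Variables (R : realFieldType) (d m n : nat).

(* A linear map P : R^d -> M^{m x n} is given by its vectors a_ij in R^d:
   P(z) = (a_ij . z)_ij. *)
Definition linmap := 'I_m -> 'I_n -> 'rV[R]_d.

Definition evalP (a : linmap) (z : 'rV[R]_d) : 'M[R]_(m, n) :=
  \matrix_(i, j) \sum_(k < d) a i j 0 k * z 0 k.

Definition linform (v : 'rV[R]_d) : {mpoly R[d]} :=
  \sum_(k < d) v 0 k *: 'X_k.

Definition polymx (a : linmap) : 'M[{mpoly R[d]}]_(m, n) :=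
  \matrix_(i, j) linform (a i j).

Definition image_set (a : linmap) : 'M[R]_(m, n) -> Prop :=
  fun A => exists z, A = evalP a z.

Definition has_rank1_connection (K : 'M[R]_(m, n) -> Prop) : Prop :=
  exists A B, [/\ K A, K B, A != B & \rank (A - B) = 1%N].

Inductive elem_op : 'M[{mpoly R[d]}]_(m, n) -> 'M[{mpoly R[d]}]_(m, n) -> Prop :=
| op_row_swap i1 i2 X : elem_op X (xrow i1 i2 X)
| op_row_scale i (c : R) X : c != 0 ->
    elem_op X (\matrix_(k, j) if k == i then c%:MP * X k j else X k j)
| op_row_add i1 i2 (c : R) X : i1 != i2 ->
    elem_op X (\matrix_(k, j) if k == i2 then X k j + c%:MP * X i1 j else X k j)
| op_col_swap j1 j2 X : elem_op X (xcol j1 j2 X)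
| op_col_scale j (c : R) X : c != 0 ->
    elem_op X (\matrix_(k, l) if l == j then c%:MP * X k l else X k l)
| op_col_add j1 j2 (c : R) X : j1 != j2 ->
    elem_op X (\matrix_(k, l) if l == j2 then X k l + c%:MP * X k j1 else X k l).

Inductive mx_equiv : 'M[{mpoly R[d]}]_(m, n) -> 'M[{mpoly R[d]}]_(m, n) -> Prop :=
| mx_equiv_refl X : mx_equiv X X
| mx_equiv_step X Y Z : elem_op X Y -> mx_equiv Y Z -> mx_equiv X Z.

Definition minor2 (X : 'M[{mpoly R[d]}]_(m, n)) i1 i2 j1 j2 : {mpoly R[d]} :=
  X i1 j1 * X i2 j2 - X i1 j2 * X i2 j1.

Definition minor_span (X : 'M[{mpoly R[d]}]_(m, n)) : {mpoly R[d]} -> Prop :=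
  fun p => exists c : 'I_m -> 'I_m -> 'I_n -> 'I_n -> R,
    p = \sum_(i1 < m) \sum_(i2 < m | (i1 < i2)%N) \sum_(j1 < n)
          \sum_(j2 < n | (j1 < j2)%N) c i1 i2 j1 j2 *: minor2 X i1 i2 j1 j2.

End Defs.

From mathcomp Require Import all_boot all_algebra.
From mathcomp Require Import mpoly.
From mathcomp Require Import ring.
Set Implicit Arguments. Unset Strict Implicit. Unset Printing Implicit Defensive.
Import GRing.Theory.
Local Open Scope ring_scope.

(* Each elementary operation multiplies P(z) on one side by an invertible real
   matrix, so P_2(z) = E P_1(z) F with E, F invertible and constant; since also
   P_1(z) = E^-1 P_2(z) F^-1, it suffices to transfer both properties in one
   direction.  The linear bijection A |-> E A F maps K_1 into K_2 and preserves
   rank, and by the 2x2 Cauchy-Binet formula every minor of E P_1(z) F is a real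
   combination of minors of P_1(z). *)

Section DeltaMul.
Variable K : pzRingType.

Lemma delta_mulmxE m n p (a : 'I_m) (b : 'I_n) (X : 'M[K]_(n, p)) k j :
  (delta_mx a b *m X) k j = if k == a then X b j else 0.
Proof.
rewrite mxE (bigD1 b) //= big1 => [|l /negbTE nl]; last by rewrite mxE nl andbF mul0r.
by rewrite mxE eqxx andbT addr0; case: (k == a); rewrite ?mul1r ?mul0r.
Qed.

Lemma mulmx_deltaE m n p (a : 'I_n) (b : 'I_p) (X : 'M[K]_(m, n)) k j :
  (X *m delta_mx a b) k j = if j == b then X k a else 0.
Proof.
rewrite mxE (bigD1 a) //= big1 => [|l /negbTE nl]; last by rewrite mxE nl mulr0.
by rewrite mxE eqxx /= addr0; case: (j == b); rewrite ?mulr1 ?mulr0.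
Qed.

End DeltaMul.

Lemma unitmx_add_delta (K : fieldType) n (a b : 'I_n) (s : K) :
  1 + s *+ (a == b) != 0 -> 1%:M + s *: delta_mx a b \in unitmx.
Proof.
have inv t : s + t + s * t *+ (a == b) = 0 ->
    (1%:M + s *: delta_mx a b) *m (1%:M + t *: delta_mx a b) = 1%:M.
  move=> st; rewrite mulmxDl !mulmxDr !mul1mx mulmx1 -scalemxAl -scalemxAr.
  rewrite mul_delta_mx_cond scalerA -scaler_nat scalerA -addrA -!scalerDl addrA.
  by rewrite [t + s]addrC mulr_natr [b == a]eq_sym st scale0r addr0.
have [eq_ab hs | ne_ab _] := eqVneq a b.
  suff /inv/mulmx1_unit[] : s + - s / (1 + s) + s * (- s / (1 + s)) *+ (a == b) = 0
    by [].
  by rewrite eq_ab eqxx /= mulr1n in hs *; field.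
suff /inv/mulmx1_unit[] : s - s + s * - s *+ (a == b) = 0 by [].
by rewrite (negbTE ne_ab) mulr0n addr0 subrr.
Qed.

Lemma mxrank_unit_sandwich (K : fieldType) m n (E : 'M[K]_m) (F : 'M[K]_n) A :
  E \in unitmx -> F \in unitmx -> \rank (E *m A *m F) = \rank A.
Proof.
by move=> uE uF; rewrite mxrankMfree ?row_free_unit // eqmxMfull ?row_full_unit.
Qed.

Lemma rank1_connection_sandwich (R : realFieldType) m n
    (E : 'M[R]_m) (F : 'M[R]_n) (K1 K2 : 'M[R]_(m, n) -> Prop) :
  E \in unitmx -> F \in unitmx -> (forall A, K1 A -> K2 (E *m A *m F)) ->
  has_rank1_connection K1 -> has_rank1_connection K2.
Proof.
move=> uE uF K12 [A [B [K1A K1B AB rkAB]]].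
exists (E *m A *m F), (E *m B *m F); split; try exact: K12.
  by apply: contra AB => /eqP/(can_inj (mulmxK uF))/(can_inj (mulKmx uE))->.
by rewrite -mulmxBl -mulmxBr mxrank_unit_sandwich.
Qed.

Section PolynomialMatrices.
Variables (R : realFieldType) (d : nat).
Local Notation T := {mpoly R[d]}.
Local Notation C := (map_mx (@mpolyC d R)).

Definition unit_equiv m n (X Y : 'M[T]_(m, n)) :=
  exists (E : 'M[R]_m) (F : 'M[R]_n),
    [/\ E \in unitmx, F \in unitmx & Y = C E *m X *m C F].

Lemma unit_equiv_refl m n (X : 'M[T]_(m, n)) : unit_equiv X X.
Proof. by exists 1%:M, 1%:M; rewrite !unitmx1 !map_mx1 mul1mx mulmx1. Qed.

Lemma unit_equiv_trans m n (X Y Z : 'M[T]_(m, n)) :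
  unit_equiv X Y -> unit_equiv Y Z -> unit_equiv X Z.
Proof.
move=> [E [F [uE uF ->]]] [E' [F' [uE' uF' ->]]].
exists (E' *m E), (F *m F'); rewrite !unitmx_mul uE uF uE' uF'.
by rewrite !map_mxM !mulmxA.
Qed.

Lemma unit_equiv_sym m n (X Y : 'M[T]_(m, n)) : unit_equiv X Y -> unit_equiv Y X.
Proof.
move=> [E [F [uE uF ->]]]; exists (invmx E), (invmx F).
rewrite !unitmx_inv uE uF !mulmxA -map_mxM mulVmx // map_mx1 mul1mx.
by rewrite -mulmxA -map_mxM mulmxV // map_mx1 mulmx1.
Qed.

Lemma unit_equiv_mull m n (E : 'M[R]_m) (X : 'M[T]_(m, n)) :
  E \in unitmx -> unit_equiv X (C E *m X).
Proof. by exists E, 1%:M; rewrite unitmx1 map_mx1 mulmx1. Qed.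

Lemma unit_equiv_mulr m n (F : 'M[R]_n) (X : 'M[T]_(m, n)) :
  F \in unitmx -> unit_equiv X (X *m C F).
Proof. by exists 1%:M, F; rewrite unitmx1 map_mx1 mul1mx. Qed.

Lemma map_add_delta_mulmx m n (a b : 'I_m) (s : R) (X : 'M[T]_(m, n)) :
  C (1%:M + s *: delta_mx a b) *m X =
  \matrix_(k, j) if k == a then X k j + s%:MP * X b j else X k j.
Proof.
rewrite map_mxD map_mx1 map_mxZ map_delta_mx mulmxDl mul1mx -scalemxAl.
apply/matrixP => k j; rewrite [LHS]mxE [X in _ + X]mxE delta_mulmxE !mxE.
by case: (k == a); rewrite ?mulr0 ?addr0.
Qed.

Lemma mulmx_map_add_delta m n (a b : 'I_n) (s : R) (X : 'M[T]_(m, n)) :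
  X *m C (1%:M + s *: delta_mx a b) =
  \matrix_(k, j) if j == b then X k j + s%:MP * X k a else X k j.
Proof.
rewrite map_mxD map_mx1 map_mxZ map_delta_mx mulmxDr mulmx1 -scalemxAr.
apply/matrixP => k j; rewrite [LHS]mxE [X in _ + X]mxE mulmx_deltaE !mxE.
by case: (j == b); rewrite ?mulr0 ?addr0.
Qed.

Lemma elem_op_unit_equiv m n (X Y : 'M[T]_(m, n)) : elem_op X Y -> unit_equiv X Y.
Proof.
case=> {X Y}.
- move=> i1 i2 X; rewrite xrowE /tperm_mx -(map_perm_mx (@mpolyC d R)).
  by apply: unit_equiv_mull; apply: unitmx_perm.
- move=> i c X c0.
  have -> : \matrix_(k, j) (if k == i then c%:MP * X k j else X k j) =
            C (1%:M + (c - 1) *: delta_mx i i) *m X.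
    rewrite map_add_delta_mulmx; apply/matrixP => k j; rewrite !mxE.
    by case: eqP => // ->; rewrite mpolyCB mpolyC1; ring.
  by apply/unit_equiv_mull/unitmx_add_delta; rewrite eqxx /= mulr1n addrC subrK.
- move=> i1 i2 c X ne; rewrite -map_add_delta_mulmx.
  apply/unit_equiv_mull/unitmx_add_delta.
  by rewrite [i2 == i1]eq_sym (negbTE ne) addr0 oner_neq0.
- move=> j1 j2 X; rewrite xcolE /tperm_mx -(map_perm_mx (@mpolyC d R)).
  by apply: unit_equiv_mulr; apply: unitmx_perm.
- move=> j c X c0.
  have -> : \matrix_(k, l) (if l == j then c%:MP * X k l else X k l) =
            X *m C (1%:M + (c - 1) *: delta_mx j j).
    rewrite mulmx_map_add_delta; apply/matrixP => k l; rewrite !mxE.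
    by case: eqP => // ->; rewrite mpolyCB mpolyC1; ring.
  by apply/unit_equiv_mulr/unitmx_add_delta; rewrite eqxx /= mulr1n addrC subrK.
- move=> j1 j2 c X ne; rewrite -mulmx_map_add_delta.
  apply/unit_equiv_mulr/unitmx_add_delta.
  by rewrite (negbTE ne) addr0 oner_neq0.
Qed.

Lemma mx_equiv_unit_equiv m n (X Y : 'M[T]_(m, n)) : mx_equiv X Y -> unit_equiv X Y.
Proof.
elim=> [Z|X1 Y1 Z1 /elem_op_unit_equiv e1 _ e2]; first exact: unit_equiv_refl.
exact: unit_equiv_trans e1 e2.
Qed.

Lemma evalP_map_meval m n (a : linmap R d m n) z :
  evalP a z = map_mx (meval (fun k => z 0 k)) (polymx a).
Proof.
apply/matrixP => i j; rewrite !mxE /linform rmorph_sum /=.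
by apply: eq_bigr => k _; rewrite mevalZ mevalXU.
Qed.

Lemma unit_equiv_rank1_connection m n (a1 a2 : linmap R d m n) :
  unit_equiv (polymx a1) (polymx a2) ->
  has_rank1_connection (image_set a1) -> has_rank1_connection (image_set a2).
Proof.
move=> [E [F [uE uF e12]]]; apply: (rank1_connection_sandwich uE uF).
move=> _ [z ->]; exists z; rewrite !evalP_map_meval e12 !map_mxM.
have mevalC_mx p q (M : 'M[R]_(p, q)) : map_mx (meval (fun k => z 0 k)) (C M) = M.
  by apply/matrixP => i j; rewrite !mxE mevalC.
by rewrite !mevalC_mx.
Qed.

Section MinorSpan.
Variables (m n : nat) (X : 'M[T]_(m, n)).
Local Notation S := (minor_span X).

Lemma minor_span0 : S 0.
Proof.
exists (fun _ _ _ _ => 0); symmetry.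
by do 4!(apply: big1 => ? _); rewrite scale0r.
Qed.

Lemma minor_spanD p q : S p -> S q -> S (p + q).
Proof.
move=> [c ->] [c' ->]; exists (fun a b e f => c a b e f + c' a b e f).
by do 4!(rewrite -big_split; apply: eq_bigr => ? _); rewrite scalerDl.
Qed.

Lemma minor_spanZ (r : R) p : S p -> S (r *: p).
Proof.
move=> [c ->]; exists (fun a b e f => r * c a b e f).
by do 4!(rewrite scaler_sumr; apply: eq_bigr => ? _); rewrite scalerA.
Qed.

Lemma minor_spanCM (r : R) p : S p -> S (r%:MP * p).
Proof. by rewrite mul_mpolyC; apply: minor_spanZ. Qed.

Lemma minor_span_sum (I : Type) (s : seq I) (P : pred I) (G : I -> T) :
  (forall i, P i -> S (G i)) -> S (\sum_(i <- s | P i) G i).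
Proof. exact: (big_ind S minor_span0 minor_spanD). Qed.

Lemma minor_span_minor2_lt (k1 k2 : 'I_m) (l1 l2 : 'I_n) :
  (k1 < k2)%N -> (l1 < l2)%N -> S (minor2 X k1 k2 l1 l2).
Proof.
move=> lt_k lt_l.
exists (fun a b e f => ((a == k1) && (b == k2) && (e == l1) && (f == l2))%:R).
rewrite (big_only1 k1) // => [|i /negbTE ni _]; last first.
  by do 3!(apply: big1 => ? _); rewrite ni scale0r.
rewrite (big_only1 k2) // => [|i /negbTE ni _]; last first.
  by do 2!(apply: big1 => ? _); rewrite ni andbF scale0r.
rewrite (big_only1 l1) // => [|j /negbTE nj _]; last first.
  by apply: big1 => ? _; rewrite nj andbF scale0r.
rewrite (big_only1 l2) // => [|j /negbTE nj _]; last by rewrite nj andbF scale0r.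
by rewrite !eqxx scale1r.
Qed.

Lemma minor_span_minor2 (k1 k2 : 'I_m) (l1 l2 : 'I_n) : S (minor2 X k1 k2 l1 l2).
Proof.
have swap_rows i1 i2 j1 j2 : minor2 X i1 i2 j1 j2 = (-1) *: minor2 X i2 i1 j1 j2.
  by rewrite scaleN1r /minor2; ring.
have swap_cols i1 i2 j1 j2 : minor2 X i1 i2 j1 j2 = (-1) *: minor2 X i1 i2 j2 j1.
  by rewrite scaleN1r /minor2; ring.
have minor2_cols_lt (i1 i2 : 'I_m) : (i1 < i2)%N -> S (minor2 X i1 i2 l1 l2).
  move=> lt_i; case: (ltngtP l1 l2) => [|lt_l|/ord_inj eq_l].
  - exact: minor_span_minor2_lt.
  - by rewrite swap_cols; apply/minor_spanZ/minor_span_minor2_lt.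
  - by rewrite /minor2 eq_l subrr; apply: minor_span0.
case: (ltngtP k1 k2) => [|lt_k|/ord_inj eq_k].
- exact: minor2_cols_lt.
- by rewrite swap_rows; apply/minor_spanZ/minor2_cols_lt.
- by rewrite /minor2 eq_k mulrC subrr; apply: minor_span0.
Qed.

End MinorSpan.

Lemma minor2_mulmxl p q (E : 'M[T]_p) (X : 'M[T]_(p, q)) i1 i2 j1 j2 :
  minor2 (E *m X) i1 i2 j1 j2 =
  \sum_k1 \sum_k2 E i1 k1 * E i2 k2 * minor2 X k1 k2 j1 j2.
Proof.
rewrite /minor2 !mxE !big_distrlr -sumrB; apply: eq_bigr => k1 _.
rewrite -sumrB; apply: eq_bigr => k2 _ /=; ring.
Qed.

Lemma minor2_trmx p q (X : 'M[T]_(p, q)) i1 i2 j1 j2 :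
  minor2 X^T j1 j2 i1 i2 = minor2 X i1 i2 j1 j2.
Proof. by rewrite /minor2 !mxE; ring. Qed.

Lemma minor2_mulmxr p q (X : 'M[T]_(p, q)) (F : 'M[T]_q) i1 i2 j1 j2 :
  minor2 (X *m F) i1 i2 j1 j2 =
  \sum_l1 \sum_l2 F l1 j1 * F l2 j2 * minor2 X i1 i2 l1 l2.
Proof.
rewrite -minor2_trmx trmx_mul minor2_mulmxl.
by do 2!(apply: eq_bigr => ? _); rewrite minor2_trmx !mxE.
Qed.

Lemma minor_span_map_mulmx m n (E : 'M[R]_m) (F : 'M[R]_n) (X : 'M[T]_(m, n)) p :
  minor_span (C E *m X *m C F) p -> minor_span X p.
Proof.
move=> [c ->]; do 4!(apply: minor_span_sum => ? _); apply: minor_spanZ.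
rewrite minor2_mulmxr; do 2!(apply: minor_span_sum => ? _).
rewrite minor2_mulmxl !mxE -mulrA; do 2!apply: minor_spanCM.
do 2!(apply: minor_span_sum => ? _).
by rewrite !mxE -mulrA; do 2!apply: minor_spanCM; apply: minor_span_minor2.
Qed.

Lemma unit_equiv_minor_span m n (X Y : 'M[T]_(m, n)) p :
  unit_equiv X Y -> minor_span Y p -> minor_span X p.
Proof. by move=> [E [F [_ _ ->]]]; apply: minor_span_map_mulmx. Qed.

End PolynomialMatrices.

Theorem lemma3 (R : realFieldType) (d m n : nat)
  (hd : (0 < d)%N) (hmn : (2 <= minn m n)%N) (hdmn : (d <= m * n)%N)
  (a1 a2 : linmap R d m n)
  (inj1 : injective (evalP a1)) (inj2 : injective (evalP a2))
  (heq : mx_equiv (polymx a1) (polymx a2)) :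
  (~ has_rank1_connection (image_set a1) <-> ~ has_rank1_connection (image_set a2))
  /\ (forall p, minor_span (polymx a1) p <-> minor_span (polymx a2) p).
Proof.
have e12 := mx_equiv_unit_equiv heq.
have e21 := unit_equiv_sym e12.
split; first by split; apply: contra_not; apply: unit_equiv_rank1_connection.
by move=> p; split; apply: unit_equiv_minor_span.
Qed.
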